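(* Let $(H,\prec)$ be an elementary POP-graph with exactly one internal vertex, and let $(G_1,\prec_1),(G_2,\prec_2)$ be POP-graphs. (1) If the compositions are defined and $(H,\prec)\circ(G_1,\prec_1)=(H,\prec)\circ(G_2,\prec_2)$, then $(G_1,\prec_1)=(G_2,\prec_2)$. (2) If the compositions are defined and $(G_1,\prec_1)\circ(H,\prec)=(G_2,\prec_2)\circ(H,\prec)$, then $(G_1,\prec_1)=(G_2,\prec_2)$.
   Context: A progressive graph is a finite directed acyclic graph (parallel edges allowed) in which every source and every sink has degree one; degree-one vertices are boundary vertices, the others internal. It is elementary if each connected component has at most one internal vertex. An input edge is an edge whose initial vertex is a boundary vertex; an output edge one whose terminal vertex is a boundary vertex. For edges write $e\to e'$ if $e\neq e'$ and there is a directed path whose first edge is $e$ and last edge is $e'$. A planar order on $G$ is a linear order $\prec$ on $E(G)$ such that (P1) $e_1\to e_2$ implies $e_1\prec e_2$; (P2) if $e_1\prec e_2\prec e_3$ and $e_1\to e_3$ then $e_1\to e_2$ or $e_2\to e_3$. A POP-graph is a progressive graph with a planar order. Equality of POP-graphs means isomorphism: bijections of vertices and edges preserving incidence, direction and the planar orders. Composition: let $(G_1,\prec_1)$, $(G_2,\prec_2)$ be POP-graphs, $G_1$ with output edges $o_1\prec_1\cdots\prec_1 o_n$ and $G_2$ with input edges $i_1\prec_2\cdots\prec_2 i_n$ (composition is defined when these numbers agree). $G_2\circ G_1$ is obtained from $G_1\sqcup G_2$ by deleting the sinks of $G_1$, the sources of $G_2$ and the edges $o_k,i_k$, and adding for each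 $k$ a new edge $\overline{e_k}$ from the initial vertex of $o_k$ to the terminal vertex of $i_k$. With $Q_1=\{e\in E(G_1): e\prec_1 o_1\}$, $Q_k=\{e: o_{k-1}\prec_1 e\prec_1 o_k\}$, $P_k=\{e\in E(G_2): i_k\prec_2 e\prec_2 i_{k+1}\}$ ($k<n$), $P_n=\{e: i_n\prec_2 e\}$, the order $\prec_2\circ\prec_1$ lists $Q_1,\{\overline{e_1}\},P_1,\dots,Q_n,\{\overline{e_n}\},P_n$ consecutively, each $Q_k$ ordered by $\prec_1$, each $P_k$ by $\prec_2$; $(G_2,\prec_2)\circ(G_1,\prec_1):=(G_2\circ G_1,\prec_2\circ\prec_1)$. *)

From HB Require Import structures.
From mathcomp Require Import all_boot.
Set Implicit Arguments. Unset Strict Implicit. Unset Printing Implicit Defensive.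

Record graph := Graph {
  gV : finType;
  gE : finType;
  gsrc : gE -> gV;
  gtgt : gE -> gV }.

Section GraphDefs.
Variable G : graph.
Local Notation V := (gV G).
Local Notation E := (gE G).
Local Notation src := (@gsrc G).
Local Notation tgt := (@gtgt G).

Definition indeg (v : V) : nat := #|[set e | tgt e == v]|.
Definition outdeg (v : V) : nat := #|[set e | src e == v]|.
Definition deg (v : V) : nat := indeg v + outdeg v.

Definition is_source (v : V) : bool := [forall e, tgt e != v].
Definition is_sink (v : V) : bool := [forall e, src e != v].

Definition boundary (v : V) : bool := deg v == 1.
Definition internal (v : V) : bool := ~~ boundary v.

Definition enext : rel E := fun e f => tgt e == src f.
Definition epath (e e' : E) : bool := (e != e') && connect enext e e'.

Definition acyclic : Prop := forall e f : E, enext e f -> ~~ connect enext f e.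

Definition progressive : Prop :=
  acyclic /\
  (forall v : V, is_source v -> deg v = 1) /\
  (forall v : V, is_sink v -> deg v = 1).

Definition vadj : rel V :=
  fun u v => [exists e, ((src e == u) && (tgt e == v)) || ((src e == v) && (tgt e == u))].

Definition elementary : Prop :=
  forall u v : V, internal u -> internal v -> connect vadj u v -> u = v.

Definition input_edge (e : E) : bool := boundary (src e).
Definition output_edge (e : E) : bool := boundary (tgt e).

Definition linear_order (lt : rel E) : Prop :=
  (forall e, ~~ lt e e) /\
  (forall e1 e2 e3, lt e1 e2 -> lt e2 e3 -> lt e1 e3) /\
  (forall e1 e2, e1 != e2 -> lt e1 e2 || lt e2 e1).

Definition planar_order (lt : rel E) : Prop :=
  linear_order lt /\
  (forall e1 e2, epath e1 e2 -> lt e1 e2) /\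
  (forall e1 e2 e3, lt e1 e2 -> lt e2 e3 -> epath e1 e3 ->
     epath e1 e2 \/ epath e2 e3).

Lemma src_not_sink (e : E) : ~~ is_sink (src e).
Proof. by apply/forallPn; exists e; rewrite negbK. Qed.

Lemma tgt_not_source (e : E) : ~~ is_source (tgt e).
Proof. by apply/forallPn; exists e; rewrite negbK. Qed.

End GraphDefs.

Record popgraph := POP { pg : graph; plt : rel (gE pg) }.

Definition is_pop (P : popgraph) : Prop :=
  progressive (pg P) /\ planar_order (@plt P).

Definition n_internal (G : graph) : nat := #|[set v : gV G | internal v]|.

Definition n_inputs (P : popgraph) : nat := #|[set e : gE (pg P) | input_edge e]|.
Definition n_outputs (P : popgraph) : nat := #|[set e : gE (pg P) | output_edge e]|.

Definition comp_defined (P1 P2 : popgraph) : Prop := n_outputs P1 = n_inputs P2.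

(* Equality of POP-graphs: isomorphism preserving incidence, direction and
   planar orders. *)
Definition pop_iso (P Q : popgraph) : Prop :=
  exists (fV : gV (pg P) -> gV (pg Q)) (fE : gE (pg P) -> gE (pg Q)),
    [/\ bijective fV, bijective fE,
        forall e, gsrc (fE e) = fV (gsrc e),
        forall e, gtgt (fE e) = fV (gtgt e) &
        forall e e', plt (fE e) (fE e') = plt e e'].

(* Composition  comp P1 P2 = P2 o P1  (P1 first, then P2).                 *)
Section Comp.
Variables P1 P2 : popgraph.
Local Notation G1 := (pg P1).
Local Notation G2 := (pg P2).
Local Notation lt1 := (@plt P1).
Local Notation lt2 := (@plt P2).

(* rank of an edge = number of output (resp. input) edges strictly below it;
   the k-th output o_k (1-based) has rank k-1, and the edges of Q_k are the
   non-output edges of G1 of rank k-1; the edges of P_k are the non-input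
   edges of G2 with exactly k inputs below them. *)
Definition rankO (e : gE G1) : nat := #|[set o : gE G1 | output_edge o && lt1 o e]|.
Definition rankI (e : gE G2) : nat := #|[set i : gE G2 | input_edge i && lt2 i e]|.

Definition match_in (o : gE G1) : option (gE G2) :=
  [pick i : gE G2 | input_edge i && (rankI i == rankO o)].

Definition compV : finType :=
  ({v : gV G1 | ~~ is_sink v} + {v : gV G2 | ~~ is_source v})%type.

(* Edges: non-output edges of G1, non-input edges of G2, and one new edge
   \bar e_k for each output edge o_k of G1 (indexed by o_k). *)
Definition compE : finType :=
  (({e : gE G1 | ~~ output_edge e} + {e : gE G2 | ~~ input_edge e})
    + {o : gE G1 | output_edge o})%type.

(* inclusion of vertices; the fallback is never used for well-formed inputs *)
Definition lift1 (e : gE G1) (v : gV G1) : compV :=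
  match insub v with
  | Some u => inl u
  | None => inl (Sub (gsrc e) (src_not_sink e))
  end.
Definition lift2 (e : gE G2) (v : gV G2) : compV :=
  match insub v with
  | Some u => inr u
  | None => inr (Sub (gtgt e) (tgt_not_source e))
  end.

Definition comp_src (c : compE) : compV :=
  match c with
  | inl (inl e) => lift1 (val e) (gsrc (val e))
  | inl (inr e) => lift2 (val e) (gsrc (val e))
  | inr o => lift1 (val o) (gsrc (val o))
  end.

Definition comp_tgt (c : compE) : compV :=
  match c with
  | inl (inl e) => lift1 (val e) (gtgt (val e))
  | inl (inr e) => lift2 (val e) (gtgt (val e))
  | inr o => match match_in (val o) with
             | Some i => lift2 i (gtgt i)
             | None => lift1 (val o) (gsrc (val o))
             end
  end.

Definition comp_graph : graph := @Graph compV compE comp_src comp_tgt.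

(* block index: Q_k -> 3(k-1), \bar e_k -> 3(k-1)+1, P_k -> 3(k-1)+2 *)
Definition blk (c : compE) : nat :=
  match c with
  | inl (inl e) => 3 * rankO (val e)
  | inr o => 3 * rankO (val o) + 1
  | inl (inr e) => 3 * rankI (val e) - 1
  end.

Definition within (c d : compE) : bool :=
  match c, d with
  | inl (inl e), inl (inl f) => lt1 (val e) (val f)
  | inl (inr e), inl (inr f) => lt2 (val e) (val f)
  | inr o, inr o' => lt1 (val o) (val o')
  | _, _ => false
  end.

Definition comp_lt : rel compE :=
  fun c d => (blk c < blk d) || ((blk c == blk d) && within c d).

Definition comp : popgraph := @POP comp_graph comp_lt.

End Comp.

Notation "P2 \oo P1" := (comp P1 P2) (at level 40, left associativity).

From mathcomp Require Import all_boot zify.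
Set Implicit Arguments. Unset Strict Implicit. Unset Printing Implicit Defensive.

(* Every edge of [H \oo G] comes from an edge of [G] or of [H], an output of [G]
   and the matched input of [H] giving the same edge. The edges of [H \oo G] that
   end at a sink are exactly the output edges of [H], ordered as in [H]; an
   isomorphism [H \oo G1 ~ H \oo G2] preserves sinks and the planar order, hence
   ranks, so it fixes each of them, in particular an edge leaving the internal
   vertex [v] of [H], and therefore fixes [v]. All other vertices coming from [H]
   are sinks, so the isomorphism sends vertices of [G1] to vertices of [G2], hence
   the edges of [G1] (those whose source comes from [G1]) to edges of [G2]. This
   restriction preserves order and incidences, and a graph without isolated
   vertices is determined by its edges and their incidences. Precomposition is
   dual, with sources in place of sinks. *)

Section Rank.
Variables (G : graph) (lt : rel (gE G)).
Hypothesis lt_lin : linear_order lt.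
Variable A : pred (gE G).

Let lt_irr a : ~~ lt a a.
Proof. by case: lt_lin. Qed.
Let lt_trans a b c : lt a b -> lt b c -> lt a c.
Proof. by case: lt_lin => _ [trans _]; apply: trans. Qed.
Let lt_total a b : a != b -> lt a b || lt b a.
Proof. by case: lt_lin => _ [_ total]; apply: total. Qed.

Definition rank (a : gE G) : nat := #|[set b | A b && lt b a]|.

Lemma rank_le a b : lt a b -> rank a <= rank b.
Proof.
move=> ab; apply: subset_leq_card; apply/subsetP=> x; rewrite !inE.
by case/andP=> -> xa; apply: lt_trans xa ab.
Qed.

Lemma rank_lt a b : A a -> lt a b -> rank a < rank b.
Proof.
move=> Aa ab; apply: proper_card; apply/properP; split.
  by apply/subsetP=> x; rewrite !inE => /andP[-> xa]; apply: lt_trans xa ab.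
by exists a; rewrite !inE ?Aa ?ab ?lt_irr // andbF.
Qed.

Lemma lt_of_rank a b : rank a < rank b -> lt a b.
Proof.
move=> rab; have [eab|nab] := eqVneq a b; first by rewrite eab ltnn in rab.
by case/orP: (lt_total nab) => // /rank_le; rewrite leqNgt rab.
Qed.

Lemma rank_ltE a b : A a -> lt a b = (rank a < rank b).
Proof. by move=> Aa; apply/idP/idP; [apply: rank_lt | apply: lt_of_rank]. Qed.

Lemma rank_leE a b : ~~ A a -> A b -> lt a b = (rank a <= rank b).
Proof.
move=> nAa Ab; apply/idP/idP; first exact: rank_le.
have nab : a != b by apply: contraNneq nAa => ->.
by move=> rab; case/orP: (lt_total nab) => // /(rank_lt Ab); rewrite ltnNge rab.
Qed.

Lemma rank_lexE a b : (rank a < rank b) || (rank a == rank b) && lt a b = lt a b.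
Proof.
case ab: (lt a b); last by rewrite andbF orbF; apply: contraFF ab; apply: lt_of_rank.
by rewrite andbT orbC -leq_eqVlt rank_le.
Qed.

Lemma rank_inj : {in A &, injective rank}.
Proof.
move=> a b Aa Ab rab; apply/eqP; apply: contraT => /lt_total /orP[] /rank_lt.
  by rewrite rab ltnn => /(_ Aa).
by rewrite rab ltnn => /(_ Ab).
Qed.

Lemma rank_bound a : A a -> rank a < #|[set b | A b]|.
Proof.
move=> Aa; apply: proper_card; apply/properP; split.
  by apply/subsetP=> x; rewrite !inE => /andP[].
by exists a; rewrite !inE ?Aa ?lt_irr // andbF.
Qed.

Lemma rank_onto k : k < #|[set b | A b]| -> exists2 a, A a & rank a = k.
Proof.
set S := [set b | A b] => kS.
have rank_uniq : uniq (map rank (enum S)).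
  by rewrite map_inj_in_uniq ?enum_uniq // => x y; rewrite !mem_enum !inE; apply: rank_inj.
have rank_sub : {subset map rank (enum S) <= iota 0 #|S|}.
  by move=> x /mapP[b]; rewrite mem_enum inE => Ab ->; rewrite mem_iota rank_bound.
have rank_size : size (iota 0 #|S|) <= size (map rank (enum S)).
  by rewrite size_map -cardE size_iota.
have [_ rank_eq] := uniq_min_size rank_uniq rank_sub rank_size.
have /mapP[b] : k \in map rank (enum S) by rewrite rank_eq mem_iota.
by rewrite mem_enum inE => Ab ->; exists b.
Qed.

End Rank.

Lemma rank_embed (G G' : graph) (lt : rel (gE G)) (lt' : rel (gE G'))
    (A : pred (gE G)) (A' : pred (gE G')) (j : gE G -> gE G') :
  injective j -> (forall a b, lt' (j a) (j b) = lt a b) ->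
  (forall a, A' (j a) = A a) -> (forall x, A' x -> exists a, x = j a) ->
  forall a, rank lt' A' (j a) = rank lt A a.
Proof.
move=> j_inj j_lt j_A j_onto a; rewrite /rank -(card_imset _ j_inj).
apply: eq_card => x; rewrite !inE; apply/idP/imsetP => [/andP[A'x xa]|[b]].
  by have [b xb] := j_onto x A'x; exists b; rewrite // inE -j_A -j_lt -xb A'x.
by rewrite inE -j_A -(j_lt b) => bA ->.
Qed.

Section Degrees.
Variable G : graph.
Implicit Types (v : gV G) (e : gE G).

Definition sink_edge e : bool := is_sink (gtgt e).
Definition source_edge e : bool := is_source (gsrc e).

Lemma indeg_eq0 v : (indeg v == 0) = is_source v.
Proof.
rewrite /indeg cards_eq0; apply/eqP/forallP => [in0 e|nin].
  apply/negP => /eqP tv; have : e \in [set e | gtgt e == v] by rewrite inE tv.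
  by rewrite in0 inE.
by apply/setP=> e; rewrite !inE (negbTE (nin e)).
Qed.

Lemma outdeg_eq0 v : (outdeg v == 0) = is_sink v.
Proof.
rewrite /outdeg cards_eq0; apply/eqP/forallP => [out0 e|nout].
  apply/negP => /eqP sv; have : e \in [set e | gsrc e == v] by rewrite inE sv.
  by rewrite out0 inE.
by apply/setP=> e; rewrite !inE (negbTE (nout e)).
Qed.

Lemma boundary_tgt_sink e : boundary (gtgt e) -> is_sink (gtgt e).
Proof.
have : 0 < indeg (gtgt e) by apply/card_gt0P; exists e; rewrite inE.
by rewrite /boundary /deg -outdeg_eq0; lia.
Qed.

Lemma boundary_src_source e : boundary (gsrc e) -> is_source (gsrc e).
Proof.
have : 0 < outdeg (gsrc e) by apply/card_gt0P; exists e; rewrite inE.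
by rewrite /boundary /deg -indeg_eq0; lia.
Qed.

Lemma internal_of_not_source_sink v : ~~ is_source v -> ~~ is_sink v -> internal v.
Proof.
move=> /forallPn[e]; rewrite negbK => /eqP <- nsink.
exact: contra (@boundary_tgt_sink e) nsink.
Qed.

Hypothesis G_prog : progressive G.

Lemma sink_deg v : is_sink v -> indeg v = 1.
Proof.
case: G_prog => _ [_ deg1] sv; move: (deg1 v sv).
by rewrite /deg; move: sv; rewrite -outdeg_eq0 => /eqP ->; rewrite addn0.
Qed.

Lemma source_deg v : is_source v -> outdeg v = 1.
Proof.
case: G_prog => _ [deg1 _] sv; move: (deg1 v sv).
by rewrite /deg; move: sv; rewrite -indeg_eq0 => /eqP ->.
Qed.

Lemma output_edgeE e : output_edge e = sink_edge e.
Proof.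
apply/idP/idP; first exact: boundary_tgt_sink.
move=> sink_e; rewrite /output_edge /boundary /deg sink_deg //.
by move: sink_e; rewrite /sink_edge -outdeg_eq0 => /eqP ->.
Qed.

Lemma input_edgeE e : input_edge e = source_edge e.
Proof.
apply/idP/idP; first exact: boundary_src_source.
move=> source_e; rewrite /input_edge /boundary /deg source_deg //.
by move: source_e; rewrite /source_edge -indeg_eq0 => /eqP ->.
Qed.

Lemma sink_edge_unique e f : sink_edge e -> gtgt f = gtgt e -> f = e.
Proof.
move=> /sink_deg in1 tfe; apply/eqP; apply: contraT => nfe.
have : #|[set f; e]| <= indeg (gtgt e).
  apply: subset_leq_card; apply/subsetP => x.
  by rewrite !inE => /orP[] /eqP ->; rewrite ?tfe.
by rewrite cards2 nfe in1.
Qed.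

Lemma source_edge_unique e f : source_edge e -> gsrc f = gsrc e -> f = e.
Proof.
move=> /source_deg out1 sfe; apply/eqP; apply: contraT => nfe.
have : #|[set f; e]| <= outdeg (gsrc e).
  apply: subset_leq_card; apply/subsetP => x.
  by rewrite !inE => /orP[] /eqP ->; rewrite ?sfe.
by rewrite cards2 nfe out1.
Qed.

Lemma internal_not_sink v : internal v -> ~~ is_sink v.
Proof.
apply: contraL => sv; rewrite /internal /boundary /deg negbK sink_deg //.
by move: sv; rewrite -outdeg_eq0 => /eqP ->.
Qed.

Lemma internal_not_source v : internal v -> ~~ is_source v.
Proof.
apply: contraL => sv; rewrite /internal /boundary /deg negbK source_deg //.
by move: sv; rewrite -indeg_eq0 => /eqP ->.
Qed.

Lemma tgt_neq_src e : gtgt e != gsrc e.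
Proof. by case: G_prog => acyc _; apply/negP => loop; have := acyc e e loop; rewrite connect0. Qed.

Lemma vertex_incident v : exists e, gsrc e = v \/ gtgt e = v.
Proof.
have [sv|] := boolP (is_source v).
  have /card_gt0P[e] : 0 < outdeg v by rewrite source_deg.
  by rewrite inE => /eqP sev; exists e; left.
by case/forallPn => e; rewrite negbK => /eqP tev; exists e; right.
Qed.

End Degrees.

Section PopFacts.
Variable P : popgraph.
Hypothesis P_pop : is_pop P.

Lemma pop_progressive : progressive (pg P).
Proof. by case: P_pop. Qed.

Lemma pop_linear : linear_order (@plt P).
Proof. by case: P_pop => _ []. Qed.

End PopFacts.

Definition pop_iso_maps (P Q : popgraph)
    (fV : gV (pg P) -> gV (pg Q)) (fE : gE (pg P) -> gE (pg Q)) : Prop :=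
  [/\ bijective fV, bijective fE,
      forall e, gsrc (fE e) = fV (gsrc e),
      forall e, gtgt (fE e) = fV (gtgt e) &
      forall e e', plt (fE e) (fE e') = plt e e'].

Section IsoMaps.
Variables (P Q : popgraph) (fV : gV (pg P) -> gV (pg Q)) (fE : gE (pg P) -> gE (pg Q)).
Hypothesis f_iso : pop_iso_maps fV fE.

Lemma pop_iso_maps_inv gV gE :
  cancel fV gV -> cancel gV fV -> cancel fE gE -> cancel gE fE -> pop_iso_maps gV gE.
Proof.
case: f_iso => _ _ f_src f_tgt f_lt fgV gfV fgE gfE.
split; [by exists fV | by exists fE | move=> e | move=> e | move=> e e'].
- by apply: (can_inj fgV); rewrite -f_src gfE gfV.
- by apply: (can_inj fgV); rewrite -f_tgt gfE gfV.
- by rewrite -f_lt !gfE.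
Qed.

Lemma pop_iso_maps_sink u : is_sink (fV u) = is_sink u.
Proof.
case: f_iso => bV [gE _ fgE] f_src _ _.
apply/forallP/forallP => nsink e; apply/eqP => end_e.
  by have := nsink (fE e); rewrite f_src end_e eqxx.
by have := nsink (gE e); rewrite -(bij_eq bV) -f_src fgE end_e eqxx.
Qed.

Lemma pop_iso_maps_source u : is_source (fV u) = is_source u.
Proof.
case: f_iso => bV [gE _ fgE] _ f_tgt _.
apply/forallP/forallP => nsource e; apply/eqP => end_e.
  by have := nsource (fE e); rewrite f_tgt end_e eqxx.
by have := nsource (gE e); rewrite -(bij_eq bV) -f_tgt fgE end_e eqxx.
Qed.

Lemma pop_iso_maps_sink_edge e : sink_edge (fE e) = sink_edge e.
Proof. by case: f_iso => _ _ _ f_tgt _; rewrite /sink_edge f_tgt pop_iso_maps_sink. Qed.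

Lemma pop_iso_maps_source_edge e : source_edge (fE e) = source_edge e.
Proof. by case: f_iso => _ _ f_src _ _; rewrite /source_edge f_src pop_iso_maps_source. Qed.

Lemma pop_iso_maps_rank_sink e :
  rank (@plt Q) (@sink_edge (pg Q)) (fE e) = rank (@plt P) (@sink_edge (pg P)) e.
Proof.
case: f_iso => _ bE _ _ f_lt; have [gE _ fgE] := bE.
apply: rank_embed (bij_inj bE) f_lt pop_iso_maps_sink_edge _ e.
by move=> x _; exists (gE x); rewrite fgE.
Qed.

Lemma pop_iso_maps_rank_source e :
  rank (@plt Q) (@source_edge (pg Q)) (fE e) = rank (@plt P) (@source_edge (pg P)) e.
Proof.
case: f_iso => _ bE _ _ f_lt; have [gE _ fgE] := bE.
apply: rank_embed (bij_inj bE) f_lt pop_iso_maps_source_edge _ e.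
by move=> x _; exists (gE x); rewrite fgE.
Qed.

End IsoMaps.

Definition incidence_preserving (G G' : graph) (f : gE G -> gE G') : Prop :=
  forall e e',
    [/\ gsrc e = gsrc e' -> gsrc (f e) = gsrc (f e'),
        gtgt e = gtgt e' -> gtgt (f e) = gtgt (f e') &
        gtgt e = gsrc e' -> gtgt (f e) = gsrc (f e')].

Lemma vertex_map_of_incidence (G G' : graph) (f : gE G -> gE G') :
  (forall v : gV G, exists e, gsrc e = v \/ gtgt e = v) -> incidence_preserving f ->
  exists fV : gV G -> gV G',
    (forall e, gsrc (f e) = fV (gsrc e)) /\ (forall e, gtgt (f e) = fV (gtgt e)).
Proof.
move=> incident f_inc.
suff /fin_all_exists[fV fVP] : forall v : gV G, exists v' : gV G',
    forall e, (gsrc e = v -> gsrc (f e) = v') /\ (gtgt e = v -> gtgt (f e) = v').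
  by exists fV; split=> e; [apply: (fVP _ e).1 | apply: (fVP _ e).2].
move=> v; have [e0 [<-|<-]] := incident v.
  by exists (gsrc (f e0)) => e; have [src_src _ tgt_src] := f_inc e e0.
exists (gtgt (f e0)) => e; have [_ tgt_tgt _] := f_inc e e0.
by have [_ _ tgt_src] := f_inc e0 e; split=> // /esym /tgt_src.
Qed.

Lemma pop_iso_of_edge_bij (P Q : popgraph)
    (f : gE (pg P) -> gE (pg Q)) (g : gE (pg Q) -> gE (pg P)) :
  progressive (pg P) -> progressive (pg Q) -> cancel f g -> cancel g f ->
  incidence_preserving f -> incidence_preserving g ->
  (forall e e', plt (f e) (f e') = plt e e') -> pop_iso P Q.
Proof.
move=> progP progQ fK gK f_inc g_inc f_lt.
have [fV [f_src f_tgt]] := vertex_map_of_incidence (vertex_incident progP) f_inc.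
have [gV [g_src g_tgt]] := vertex_map_of_incidence (vertex_incident progQ) g_inc.
have fVK : cancel fV gV.
  move=> v; have [e [<-|<-]] := vertex_incident progP v.
    by rewrite -f_src -g_src fK.
  by rewrite -f_tgt -g_tgt fK.
have gVK : cancel gV fV.
  move=> v; have [e [<-|<-]] := vertex_incident progQ v.
    by rewrite -g_src -f_src gK.
  by rewrite -g_tgt -f_tgt gK.
by exists fV, f; split=> //; [exists gV | exists g].
Qed.

Section Composition.
Variables P1 P2 : popgraph.
Local Notation G1 := (pg P1).
Local Notation G2 := (pg P2).
Local Notation C := (comp_graph P1 P2).
Implicit Types (e o : gE G1) (i : gE G2) (x : compE P1 P2).

(* An output [o] of [P1] and its matched input in [P2] are both sent to the
   merged edge [inr o]. *)
Definition inj1 (e : gE G1) : compE P1 P2 :=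
  match boolP (output_edge e) with
  | AltTrue h => inr (Sub e h)
  | AltFalse h => inl (inl (Sub e h))
  end.

Definition partner (i : gE G2) : option {o : gE G1 | output_edge o} :=
  [pick o | match_in P2 (val o) == Some i].

(* [x0] is a junk value: it is never reached when [P2 \oo P1] is defined. *)
Variable x0 : compE P1 P2.

Definition inj2 (i : gE G2) : compE P1 P2 :=
  match boolP (input_edge i) with
  | AltTrue _ => if partner i is Some o then inr o else x0
  | AltFalse h => inl (inr (Sub i h))
  end.

Variant inj1_spec (e : gE G1) : compE P1 P2 -> Prop :=
  | Inj1Output (h : output_edge e) : inj1_spec e (inr (Sub e h))
  | Inj1Inner (h : ~~ output_edge e) : inj1_spec e (inl (inl (Sub e h))).

Variant inj2_spec (i : gE G2) : compE P1 P2 -> Prop :=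
  | Inj2Input (o : {o : gE G1 | output_edge o}) of match_in P2 (val o) = Some i :
      inj2_spec i (inr o)
  | Inj2Inner (h : ~~ input_edge i) : inj2_spec i (inl (inr (Sub i h))).

Lemma inj1P e : inj1_spec e (inj1 e).
Proof. by rewrite /inj1; destruct (boolP (output_edge e)); constructor. Qed.

Hypotheses (P1_pop : is_pop P1) (P2_pop : is_pop P2) (P12 : comp_defined P1 P2).
Local Notation lt1 := (@plt P1).
Local Notation lt2 := (@plt P2).
Let prog1 := pop_progressive P1_pop.
Let prog2 := pop_progressive P2_pop.
Let lin1 := pop_linear P1_pop.
Let lin2 := pop_linear P2_pop.

Lemma rankOE e : rankO e = rank lt1 (@output_edge G1) e. Proof. by []. Qed.
Lemma rankIE i : rankI i = rank lt2 (@input_edge G2) i. Proof. by []. Qed.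

Lemma match_inP o i : match_in P2 o = Some i -> input_edge i /\ rankI i = rankO o.
Proof. by rewrite /match_in; case: pickP => // j /andP[ij /eqP rj] [<-]. Qed.

Lemma match_in_exists o : output_edge o -> exists i, match_in P2 o = Some i.
Proof.
move=> oo; have : rankO o < n_inputs P2 by rewrite -P12 rankOE (rank_bound lin1).
case/(rank_onto lin2) => i ii ri.
rewrite /match_in; case: pickP => [j _|/(_ i)]; first by exists j.
by rewrite ii rankIE ri eqxx.
Qed.

Lemma match_in_inj o o' i : output_edge o -> output_edge o' ->
  match_in P2 o = Some i -> match_in P2 o' = Some i -> o = o'.
Proof.
move=> oo oo' /match_inP[_ ri] /match_inP[_ ri'].
by apply: (rank_inj lin1 oo oo'); rewrite -!rankOE -ri -ri'.
Qed.

Lemma match_in_onto i : input_edge i -> exists2 o : gE G1, output_edge o & match_in P2 o = Some i.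
Proof.
move=> ii; have : rankI i < n_outputs P1 by rewrite P12 rankIE (rank_bound lin2).
case/(rank_onto lin1) => o oo ro; exists o => //.
have [j mj] := match_in_exists oo; rewrite mj; have [ij rj] := match_inP mj.
by congr Some; apply: (rank_inj lin2 ij ii); rewrite -!rankIE rj rankOE ro.
Qed.

Lemma inj2P i : inj2_spec i (inj2 i).
Proof.
rewrite /inj2 /partner; destruct (boolP (input_edge i)) as [ii|h]; last by constructor.
have [o oo mo] := match_in_onto ii.
case: pickP => [o' /eqP mo'|/(_ (Sub o oo))]; last by rewrite mo eqxx.
by constructor.
Qed.

Lemma inj1_output (o : {o : gE G1 | output_edge o}) : inj1 (val o) = inr o.
Proof. by case: inj1P => h; [congr inr; apply: val_inj | have := valP o; rewrite (negbTE h)]. Qed.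

Lemma inj1_inner (y : {e : gE G1 | ~~ output_edge e}) : inj1 (val y) = inl (inl y).
Proof. by case: inj1P => h; [have := valP y; rewrite h | congr (inl (inl _)); apply: val_inj]. Qed.

Lemma inj2_input (o : {o : gE G1 | output_edge o}) i :
  match_in P2 (val o) = Some i -> inj2 i = inr o.
Proof.
move=> mo; case: inj2P => [o' mo'|h].
  by congr inr; apply: val_inj; apply: match_in_inj mo' mo; rewrite ?(valP o) ?(valP o').
by have [ii _] := match_inP mo; have := h; rewrite ii.
Qed.

Lemma inj2_inner (y : {i : gE G2 | ~~ input_edge i}) : inj2 (val y) = inl (inr y).
Proof.
case: inj2P => [o mo|h]; last by congr (inl (inr _)); apply: val_inj.
by have [ii _] := match_inP mo; have := valP y; rewrite ii.
Qed.

Lemma inj1_inj : injective inj1.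
Proof. by move=> e e'; case: inj1P => h; case: inj1P => h' // => -[]. Qed.

Lemma inj2_inj : injective inj2.
Proof.
move=> i i'; case: inj2P => [o mo|h]; case: inj2P => [o' mo'|h'] //.
  by case=> oo'; move: mo; rewrite oo' mo' => -[].
by case.
Qed.

Lemma inj1_lt e e' : comp_lt (inj1 e) (inj1 e') = lt1 e e'.
Proof.
have lex := rank_lexE lin1 (@output_edge G1) e e'.
case: inj1P => h; case: inj1P => h'; rewrite /comp_lt /=.
- by rewrite ltn_add2r eqn_add2r ltn_mul2l eqn_mul2l.
- by rewrite andbF orbF (rank_ltE lin1 _ h) -!rankOE; apply/idP/idP; lia.
- by rewrite andbF orbF (rank_leE lin1 h h') -!rankOE; apply/idP/idP; lia.
- by rewrite ltn_mul2l eqn_mul2l.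
Qed.

Lemma inj2_lt i i' : comp_lt (inj2 i) (inj2 i') = lt2 i i'.
Proof.
case: inj2P => [o /match_inP[ii ri]|h]; case: inj2P => [o' /match_inP[ii' ri']|h'];
  rewrite /comp_lt /=.
- rewrite ltn_add2r eqn_add2r ltn_mul2l eqn_mul2l /=.
  rewrite (rank_ltE lin1 _ (valP o)) (rank_ltE lin2 _ ii).
  by rewrite -!rankOE -!rankIE -ri -ri'; case: ltngtP.
- rewrite andbF orbF (rank_ltE lin2 _ ii) -!rankIE -ri.
  by apply/idP/idP; lia.
- rewrite andbF orbF (rank_leE lin2 h ii') -!rankIE -ri'.
  by apply/idP/idP; lia.
- have lex := rank_lexE lin2 (@input_edge G2) i i'.
  have -> : (3 * rankI i - 1 < 3 * rankI i' - 1) = (rankI i < rankI i').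
    by apply/idP/idP; lia.
  have -> : (3 * rankI i - 1 == 3 * rankI i' - 1) = (rankI i == rankI i').
    by apply/idP/idP => /eqP eq_blk; apply/eqP; lia.
  exact: lex.
Qed.

Lemma lift1E e v (h : ~~ is_sink v) : lift1 P2 e v = inl (Sub v h).
Proof. by rewrite /lift1 insubT. Qed.

Lemma lift2E i v (h : ~~ is_source v) : lift2 P1 i v = inr (Sub v h).
Proof. by rewrite /lift2 insubT. Qed.

Lemma comp_src_inj1 e : comp_src (inj1 e) = inl (Sub (gsrc e) (src_not_sink e)).
Proof. by case: inj1P => h; apply: lift1E. Qed.

Lemma comp_tgt_inj1 e (h : ~~ sink_edge e) : comp_tgt (inj1 e) = inl (Sub (gtgt e) h).
Proof.
case: inj1P => ho; last exact: lift1E.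
by have := h; rewrite -(output_edgeE prog1) ho.
Qed.

Lemma comp_tgt_inj1_sink e : sink_edge e -> exists w, comp_tgt (inj1 e) = inr w.
Proof.
case: inj1P => ho se; last by have := ho; rewrite (output_edgeE prog1) se.
have [i mi] := match_in_exists ho; rewrite /= mi.
by exists (Sub (gtgt i) (tgt_not_source i)); apply: lift2E.
Qed.

Lemma comp_tgt_inj2 i : comp_tgt (inj2 i) = inr (Sub (gtgt i) (tgt_not_source i)).
Proof. by case: inj2P => [o mo|h] /=; rewrite ?mo; apply: lift2E. Qed.

Lemma comp_src_inj2 i (h : ~~ source_edge i) : comp_src (inj2 i) = inr (Sub (gsrc i) h).
Proof.
case: inj2P => [o /match_inP[ii _]|hi]; last exact: lift2E.
by have := h; rewrite -(input_edgeE prog2) ii.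
Qed.

Lemma comp_src_inj2_source i : source_edge i -> exists u, comp_src (inj2 i) = inl u.
Proof.
case: inj2P => [o mo|hi] si; last by have := hi; rewrite (input_edgeE prog2) si.
by exists (Sub (gsrc (val o)) (src_not_sink _)); apply: lift1E.
Qed.

Lemma inj1_onto x u : comp_src x = inl u -> exists e, x = inj1 e.
Proof.
case: x => [[y|y]|o].
- by exists (val y); rewrite inj1_inner.
- by rewrite /= /lift2; case: insub.
- by exists (val o); rewrite inj1_output.
Qed.

Lemma inj2_onto x w : comp_tgt x = inr w -> exists i, x = inj2 i.
Proof.
case: x => [[y|y]|o].
- by rewrite /= /lift1; case: insub.
- by exists (val y); rewrite inj2_inner.
- by have [i mi] := match_in_exists (valP o); exists i; rewrite (inj2_input mi).
Qed.

Lemma comp_inl_not_sink (u : {v : gV G1 | ~~ is_sink v}) : ~~ @is_sink C (inl u).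
Proof.
move: (valP u) => /forallPn[e]; rewrite negbK => /eqP se.
apply/forallPn; exists (inj1 e); rewrite negbK /= comp_src_inj1.
by apply/eqP; congr inl; apply: val_inj.
Qed.

Lemma comp_inr_not_source (w : {v : gV G2 | ~~ is_source v}) : ~~ @is_source C (inr w).
Proof.
move: (valP w) => /forallPn[i]; rewrite negbK => /eqP ti.
have tgt_i : lift2 P1 i (gtgt i) = inr w.
  by rewrite (lift2E _ (tgt_not_source i)); congr inr; apply: val_inj.
apply/forallPn; have [ii|ni] := boolP (input_edge i).
  have [o oo mo] := match_in_onto ii.
  by exists (inr (Sub o oo)); rewrite negbK /= mo tgt_i.
by exists (inl (inr (Sub i ni))); rewrite negbK /= tgt_i.
Qed.

Lemma comp_inr_sink (w : {v : gV G2 | ~~ is_source v}) :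
  @is_sink C (inr w) = is_sink (val w).
Proof.
apply/forallP/forallP => nsink e.
  apply/eqP => sew; have se : ~~ source_edge e by rewrite /source_edge sew (valP w).
  have ne : ~~ input_edge e by rewrite (input_edgeE prog2).
  have := nsink (inl (inr (Sub e ne))); rewrite /= (lift2E _ se).
  by rewrite (_ : Sub _ _ = w) ?eqxx //; apply: val_inj.
case: e => [[y|y]|o] /=; rewrite ?/lift1; try by case: insub.
have hy : ~~ source_edge (val y) by rewrite -(input_edgeE prog2) (valP y).
rewrite (lift2E _ hy); apply/eqP => -[] /(congr1 val) /= sy.
by have := nsink (val y); rewrite sy eqxx.
Qed.

Lemma comp_inl_source (u : {v : gV G1 | ~~ is_sink v}) :
  @is_source C (inl u) = is_source (val u).
Proof.
apply/forallP/forallP => nsource e.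
  apply/eqP => teu; have te : ~~ sink_edge e by rewrite /sink_edge teu (valP u).
  have := nsource (inj1 e); rewrite /= (comp_tgt_inj1 te).
  by rewrite (_ : Sub _ _ = u) ?eqxx //; apply: val_inj.
case: e => [[y|y]|o] /=.
- have hy : ~~ sink_edge (val y) by rewrite -(output_edgeE prog1) (valP y).
  rewrite (lift1E _ hy); apply/eqP => -[] /(congr1 val) /= ty.
  by have := nsource (val y); rewrite ty eqxx.
- by rewrite /lift2; case: insub.
- by have [i ->] := match_in_exists (valP o); rewrite /lift2; case: insub.
Qed.

Lemma sink_edge_inj2 i : @sink_edge C (inj2 i) = sink_edge i.
Proof. by rewrite /sink_edge /= comp_tgt_inj2 comp_inr_sink. Qed.

Lemma source_edge_inj1 e : @source_edge C (inj1 e) = source_edge e.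
Proof. by rewrite /source_edge /= comp_src_inj1 comp_inl_source. Qed.

Lemma sink_edge_comp x : @sink_edge C x -> exists i, x = inj2 i.
Proof.
rewrite /sink_edge /=; case tx: (comp_tgt x) => [u|w]; last by move=> _; apply: inj2_onto tx.
by rewrite (negbTE (comp_inl_not_sink u)).
Qed.

Lemma source_edge_comp x : @source_edge C x -> exists e, x = inj1 e.
Proof.
rewrite /source_edge /=; case sx: (comp_src x) => [u|w]; first by move=> _; apply: inj1_onto sx.
by rewrite (negbTE (comp_inr_not_source w)).
Qed.

Lemma rank_sink_inj2 i :
  rank (@plt (P2 \oo P1)) (@sink_edge C) (inj2 i) = rank lt2 (@sink_edge G2) i.
Proof.
exact: (@rank_embed G2 C _ _ _ _ _ inj2_inj inj2_lt sink_edge_inj2 sink_edge_comp i).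
Qed.

Lemma rank_source_inj1 e :
  rank (@plt (P2 \oo P1)) (@source_edge C) (inj1 e) = rank lt1 (@source_edge G1) e.
Proof.
exact: (@rank_embed G1 C _ _ _ _ _ inj1_inj inj1_lt source_edge_inj1 source_edge_comp e).
Qed.

End Composition.

Section Postcomposition.
Variable H : popgraph.
Hypothesis H_pop : is_pop H.
Variable v : gV (pg H).
Hypothesis internalE : forall w, internal w = (w == v).
Variable c0 : gE (pg H).
Hypothesis c0_src : gsrc c0 = v.

Let progH := pop_progressive H_pop.

Lemma v_not_source : ~~ is_source v.
Proof. by apply: (internal_not_source progH); rewrite internalE. Qed.

Lemma c0_not_input : ~~ input_edge c0.
Proof. by have := internalE v; rewrite eqxx /internal /input_edge c0_src. Qed.

Lemma c0_sink : sink_edge c0.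
Proof.
apply: contraT => /(internal_of_not_source_sink (tgt_not_source c0)).
by rewrite internalE -c0_src (negbTE (tgt_neq_src progH c0)).
Qed.

Definition v_nonsource : {w : gV (pg H) | ~~ is_source w} := Sub v v_not_source.

Definition comp_c0 (G : popgraph) : compE G H :=
  inl (inr (Sub c0 c0_not_input)).

Section Iso.
Variables G1 G2 : popgraph.
Hypotheses (G1_pop : is_pop G1) (G2_pop : is_pop G2).
Hypotheses (G1H : comp_defined G1 H) (G2H : comp_defined G2 H).
Variables (fV : compV G1 H -> compV G2 H) (fE : compE G1 H -> compE G2 H).
Hypothesis f_iso : pop_iso_maps (P := H \oo G1) (Q := H \oo G2) fV fE.

Let f_src e : comp_src (fE e) = fV (comp_src e).
Proof. by case: f_iso => _ _ src _ _; apply: src. Qed.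
Let f_tgt e : comp_tgt (fE e) = fV (comp_tgt e).
Proof. by case: f_iso => _ _ _ tgt _; apply: tgt. Qed.
Local Notation inj2_1 := (inj2 (comp_c0 G1)).
Local Notation inj2_2 := (inj2 (comp_c0 G2)).

Lemma iso_fixes_sink_edge c : sink_edge c -> fE (inj2_1 c) = inj2_2 c.
Proof.
move=> sc.
have sink_fc : @sink_edge (comp_graph G2 H) (fE (inj2_1 c)).
  by rewrite (pop_iso_maps_sink_edge f_iso) (sink_edge_inj2 _ G1_pop H_pop G1H).
have [c' fc] := sink_edge_comp (comp_c0 G2) G2_pop H_pop G2H sink_fc.
have sc' : sink_edge c' by rewrite -(sink_edge_inj2 (comp_c0 G2) G2_pop H_pop G2H) -fc.
rewrite fc; congr inj2; apply: (rank_inj (pop_linear H_pop) sc' sc).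
rewrite -(rank_sink_inj2 (comp_c0 G2) G2_pop H_pop G2H) -fc (pop_iso_maps_rank_sink f_iso).
exact: rank_sink_inj2.
Qed.

Lemma iso_fixes_inr_v : fV (inr v_nonsource) = inr v_nonsource.
Proof.
have src_c0 G (G_pop : is_pop G) (GH : comp_defined G H) :
    comp_src (inj2 (comp_c0 G) c0) = inr v_nonsource.
  have c0_not_source : ~~ source_edge c0 by rewrite -(input_edgeE progH) c0_not_input.
  rewrite (comp_src_inj2 (comp_c0 G) G_pop H_pop GH c0_not_source).
  by congr inr; apply: val_inj.
by rewrite -(src_c0 _ G1_pop G1H) -f_src iso_fixes_sink_edge ?c0_sink // src_c0.
Qed.

Lemma iso_inl_inl u : exists u', fV (inl u) = inl u'.
Proof.
case fu: (fV (inl u)) => [u'|w]; first by exists u'.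
have w_not_sink : ~~ is_sink (val w).
  rewrite -(comp_inr_sink G2 H_pop) -fu (pop_iso_maps_sink f_iso).
  exact: comp_inl_not_sink.
have /eqP w_v : val w == v by rewrite -internalE internal_of_not_source_sink ?(valP w).
have : fV (inl u) = fV (inr v_nonsource).
  by rewrite iso_fixes_inr_v fu; congr inr; apply: val_inj.
by case: f_iso => [/bij_inj f_inj _ _ _ _] /f_inj.
Qed.

Lemma iso_maps_inj1 :
  exists f : gE (pg G1) -> gE (pg G2), forall e, fE (inj1 H e) = inj1 H (f e).
Proof.
suff /fin_all_exists[f fP] : forall e, exists e', fE (inj1 H e) = inj1 H e' by exists f.
move=> e; have [u' fu] := iso_inl_inl (Sub (gsrc e) (src_not_sink e)).
by apply: (@inj1_onto _ _ _ u'); rewrite f_src comp_src_inj1 fu.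
Qed.

Lemma inj1_restriction_incidence (f : gE (pg G1) -> gE (pg G2)) :
  (forall e, fE (inj1 H e) = inj1 H (f e)) -> incidence_preserving f.
Proof.
move=> fP.
have src_f e : comp_src (inj1 H (f e)) = fV (comp_src (inj1 H e)) by rewrite -fP f_src.
have tgt_f e : comp_tgt (inj1 H (f e)) = fV (comp_tgt (inj1 H e)) by rewrite -fP f_tgt.
have tgt_inner e (te : ~~ sink_edge e) : ~~ sink_edge (f e).
  apply/negP => /(comp_tgt_inj1_sink G2_pop H_pop G2H)[w].
  have [u' fu] := iso_inl_inl (Sub (gtgt e) te).
  by rewrite tgt_f (comp_tgt_inj1 H G1_pop te) fu.
move=> e e'; split=> [see'|tee'|tes'].
- have : comp_src (inj1 H e) = comp_src (inj1 H e').
    by rewrite !comp_src_inj1; congr inl; apply: val_inj.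
  by move/(congr1 fV); rewrite -!src_f !comp_src_inj1 => -[].
- have [<- //|nee'] := eqVneq e e'.
  have te : ~~ sink_edge e.
    apply: contra nee' => se.
    by rewrite (sink_edge_unique (pop_progressive G1_pop) se (esym tee')).
  have te' : ~~ sink_edge e' by rewrite /sink_edge -tee'.
  have : comp_tgt (inj1 H e) = comp_tgt (inj1 H e').
    rewrite (comp_tgt_inj1 H G1_pop te) (comp_tgt_inj1 H G1_pop te').
    by congr inl; apply: val_inj.
  move/(congr1 fV); rewrite -!tgt_f (comp_tgt_inj1 H G2_pop (tgt_inner _ te)).
  by rewrite (comp_tgt_inj1 H G2_pop (tgt_inner _ te')) => -[].
- have te : ~~ sink_edge e by rewrite /sink_edge tes' src_not_sink.
  have : comp_tgt (inj1 H e) = comp_src (inj1 H e').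
    by rewrite (comp_tgt_inj1 H G1_pop te) comp_src_inj1; congr inl; apply: val_inj.
  move/(congr1 fV); rewrite -tgt_f -src_f.
  by rewrite (comp_tgt_inj1 H G2_pop (tgt_inner _ te)) comp_src_inj1 => -[].
Qed.

End Iso.

Lemma postcomp_cancel G1 G2 :
  is_pop G1 -> is_pop G2 -> comp_defined G1 H -> comp_defined G2 H ->
  pop_iso (H \oo G1) (H \oo G2) -> pop_iso G1 G2.
Proof.
move=> G1_pop G2_pop G1H G2H [fV [fE f_iso]].
have [[gV fVK gVK] [gE fEK gEK] _ _ f_lt] := f_iso.
have g_iso := pop_iso_maps_inv f_iso fVK gVK fEK gEK.
have [f fP] := iso_maps_inj1 G1_pop G2_pop G1H G2H f_iso.
have [g gP] := iso_maps_inj1 G2_pop G1_pop G2H G1H g_iso.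
apply: (pop_iso_of_edge_bij (pop_progressive G1_pop) (pop_progressive G2_pop) (f := f) (g := g)).
- by move=> e; apply: (@inj1_inj _ H); rewrite -gP -fP fEK.
- by move=> e; apply: (@inj1_inj _ H); rewrite -fP -gP gEK.
- exact: (inj1_restriction_incidence G1_pop G2_pop G1H G2H f_iso fP).
- exact: (inj1_restriction_incidence G2_pop G1_pop G2H G1H g_iso gP).
- by move=> e e'; rewrite -(inj1_lt H G1_pop) -(inj1_lt H G2_pop) -!fP; apply: f_lt.
Qed.

End Postcomposition.

Section Precomposition.
Variable H : popgraph.
Hypothesis H_pop : is_pop H.
Variable v : gV (pg H).
Hypothesis internalE : forall w, internal w = (w == v).
Variable a0 : gE (pg H).
Hypothesis a0_tgt : gtgt a0 = v.

Let progH := pop_progressive H_pop.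

Lemma v_not_sink : ~~ is_sink v.
Proof. by apply: (internal_not_sink progH); rewrite internalE. Qed.

Lemma a0_not_sink : ~~ sink_edge a0.
Proof. by rewrite /sink_edge a0_tgt v_not_sink. Qed.

Lemma a0_source : source_edge a0.
Proof.
apply: contraT => /internal_of_not_source_sink /(_ (src_not_sink a0)).
by rewrite internalE -a0_tgt eq_sym (negbTE (tgt_neq_src progH a0)).
Qed.

Definition v_nonsink : {w : gV (pg H) | ~~ is_sink w} := Sub v v_not_sink.

Section Iso.
Variables G1 G2 : popgraph.
Hypotheses (G1_pop : is_pop G1) (G2_pop : is_pop G2).
Hypotheses (HG1 : comp_defined H G1) (HG2 : comp_defined H G2).
Variables (fV : compV H G1 -> compV H G2) (fE : compE H G1 -> compE H G2).
Hypothesis f_iso : pop_iso_maps (P := G1 \oo H) (Q := G2 \oo H) fV fE.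

Let f_src e : comp_src (fE e) = fV (comp_src e).
Proof. by case: f_iso => _ _ src _ _; apply: src. Qed.
Let f_tgt e : comp_tgt (fE e) = fV (comp_tgt e).
Proof. by case: f_iso => _ _ _ tgt _; apply: tgt. Qed.
Local Notation inj2_1 := (inj2 (inj1 G1 a0)).
Local Notation inj2_2 := (inj2 (inj1 G2 a0)).

Lemma iso_fixes_source_edge c : source_edge c -> fE (inj1 G1 c) = inj1 G2 c.
Proof.
move=> sc.
have source_fc : @source_edge (comp_graph H G2) (fE (inj1 G1 c)).
  by rewrite (pop_iso_maps_source_edge f_iso) (source_edge_inj1 H_pop G1_pop HG1).
have [c' fc] := source_edge_comp H_pop G2_pop HG2 source_fc.
have sc' : source_edge c' by rewrite -(source_edge_inj1 H_pop G2_pop HG2) -fc.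
rewrite fc; congr inj1; apply: (rank_inj (pop_linear H_pop) sc' sc).
rewrite -(rank_source_inj1 H_pop G2_pop HG2) -(rank_source_inj1 H_pop G1_pop HG1).
by rewrite -fc (pop_iso_maps_rank_source f_iso).
Qed.

Lemma iso_fixes_inl_v : fV (inl v_nonsink) = inl v_nonsink.
Proof.
have tgt_a0 G : comp_tgt (inj1 G a0) = inl v_nonsink.
  by rewrite (comp_tgt_inj1 G H_pop a0_not_sink); congr inl; apply: val_inj.
by rewrite -(tgt_a0 G1) -f_tgt iso_fixes_source_edge ?a0_source // tgt_a0.
Qed.

Lemma iso_inr_inr w : exists w', fV (inr w) = inr w'.
Proof.
case fw: (fV (inr w)) => [u|w']; last by exists w'.
have u_not_source : ~~ is_source (val u).
  rewrite -(comp_inl_source H_pop G2_pop HG2) -fw (pop_iso_maps_source f_iso).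
  exact: (comp_inr_not_source H_pop G1_pop HG1).
have /eqP u_v : val u == v by rewrite -internalE internal_of_not_source_sink ?(valP u).
have : fV (inr w) = fV (inl v_nonsink).
  by rewrite iso_fixes_inl_v fw; congr inl; apply: val_inj.
by case: f_iso => [/bij_inj f_inj _ _ _ _] /f_inj.
Qed.

Lemma iso_maps_inj2 :
  exists f : gE (pg G1) -> gE (pg G2), forall i, fE (inj2_1 i) = inj2_2 (f i).
Proof.
suff /fin_all_exists[f fP] : forall i, exists i', fE (inj2_1 i) = inj2_2 i' by exists f.
move=> i; have [w' fw] := iso_inr_inr (Sub (gtgt i) (tgt_not_source i)).
apply: (inj2_onto _ H_pop G2_pop HG2 (w := w')).
by rewrite f_tgt (comp_tgt_inj2 _ H_pop G1_pop HG1) fw.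
Qed.

Lemma inj2_restriction_incidence (f : gE (pg G1) -> gE (pg G2)) :
  (forall i, fE (inj2_1 i) = inj2_2 (f i)) -> incidence_preserving f.
Proof.
move=> fP.
have src_f i : comp_src (inj2_2 (f i)) = fV (comp_src (inj2_1 i)) by rewrite -fP f_src.
have tgt_f i : comp_tgt (inj2_2 (f i)) = fV (comp_tgt (inj2_1 i)) by rewrite -fP f_tgt.
have src_inner_G1 i (si : ~~ source_edge i) : comp_src (inj2_1 i) = inr (Sub (gsrc i) si).
  exact: (comp_src_inj2 _ H_pop G1_pop HG1).
have src_inner_G2 i (si : ~~ source_edge i) : comp_src (inj2_2 i) = inr (Sub (gsrc i) si).
  exact: (comp_src_inj2 _ H_pop G2_pop HG2).
have src_inner i (si : ~~ source_edge i) : ~~ source_edge (f i).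
  apply/negP => /(comp_src_inj2_source (inj1 G2 a0) H_pop G2_pop HG2)[u].
  have [w' fw] := iso_inr_inr (Sub (gsrc i) si).
  by rewrite src_f src_inner_G1 fw.
move=> i i'; split=> [sii'|tii'|tis'].
- have [<- //|nii'] := eqVneq i i'.
  have si : ~~ source_edge i.
    apply: contra nii' => si.
    by rewrite (source_edge_unique (pop_progressive G1_pop) si (esym sii')).
  have si' : ~~ source_edge i' by rewrite /source_edge -sii'.
  have : comp_src (inj2_1 i) = comp_src (inj2_1 i').
    by rewrite (src_inner_G1 _ si) (src_inner_G1 _ si'); congr inr; apply: val_inj.
  move/(congr1 fV); rewrite -!src_f.
  by rewrite (src_inner_G2 _ (src_inner _ si)) (src_inner_G2 _ (src_inner _ si')) => -[].
- have : comp_tgt (inj2_1 i) = comp_tgt (inj2_1 i').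
    by rewrite !(comp_tgt_inj2 _ H_pop G1_pop HG1); congr inr; apply: val_inj.
  by move/(congr1 fV); rewrite -!tgt_f !(comp_tgt_inj2 _ H_pop G2_pop HG2) => -[].
- have si' : ~~ source_edge i' by rewrite /source_edge -tis' tgt_not_source.
  have : comp_tgt (inj2_1 i) = comp_src (inj2_1 i').
    by rewrite (comp_tgt_inj2 _ H_pop G1_pop HG1) (src_inner_G1 _ si'); congr inr; apply: val_inj.
  move/(congr1 fV); rewrite -tgt_f -src_f.
  by rewrite (comp_tgt_inj2 _ H_pop G2_pop HG2) (src_inner_G2 _ (src_inner _ si')) => -[].
Qed.

End Iso.

Lemma precomp_cancel G1 G2 :
  is_pop G1 -> is_pop G2 -> comp_defined H G1 -> comp_defined H G2 ->
  pop_iso (G1 \oo H) (G2 \oo H) -> pop_iso G1 G2.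
Proof.
move=> G1_pop G2_pop HG1 HG2 [fV [fE f_iso]].
have [[gV fVK gVK] [gE fEK gEK] _ _ f_lt] := f_iso.
have g_iso := pop_iso_maps_inv f_iso fVK gVK fEK gEK.
have [f fP] := iso_maps_inj2 G1_pop G2_pop HG1 HG2 f_iso.
have [g gP] := iso_maps_inj2 G2_pop G1_pop HG2 HG1 g_iso.
apply: (pop_iso_of_edge_bij (pop_progressive G1_pop) (pop_progressive G2_pop) (f := f) (g := g)).
- by move=> i; apply: (@inj2_inj _ _ (inj1 G1 a0) H_pop G1_pop HG1); rewrite -gP -fP fEK.
- by move=> i; apply: (@inj2_inj _ _ (inj1 G2 a0) H_pop G2_pop HG2); rewrite -fP -gP gEK.
- exact: (inj2_restriction_incidence G1_pop G2_pop HG1 HG2 f_iso fP).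
- exact: (inj2_restriction_incidence G2_pop G1_pop HG2 HG1 g_iso gP).
- move=> i i'; rewrite -(inj2_lt (inj1 G1 a0) H_pop G1_pop HG1).
  by rewrite -(inj2_lt (inj1 G2 a0) H_pop G2_pop HG2) -!fP; apply: f_lt.
Qed.

End Precomposition.

Theorem lemma3p6 (H G1 G2 : popgraph) :
  is_pop H -> elementary (pg H) -> n_internal (pg H) = 1 ->
  is_pop G1 -> is_pop G2 ->
  (comp_defined G1 H -> comp_defined G2 H ->
     pop_iso (H \oo G1) (H \oo G2) -> pop_iso G1 G2) /\
  (comp_defined H G1 -> comp_defined H G2 ->
     pop_iso (G1 \oo H) (G2 \oo H) -> pop_iso G1 G2).
Proof.
move=> H_pop _ H_one G1_pop G2_pop.
have [v internalE] : exists v, forall w : gV (pg H), internal w = (w == v).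
  move: H_one => /eqP /cards1P[v H_v]; exists v => w.
  by rewrite -in_set1 -H_v inE.
have v_internal : internal v by rewrite internalE.
have /forallPn[c0] := internal_not_sink (pop_progressive H_pop) v_internal.
rewrite negbK => /eqP c0_src.
have /forallPn[a0] := internal_not_source (pop_progressive H_pop) v_internal.
rewrite negbK => /eqP a0_tgt.
split.
  exact: (postcomp_cancel H_pop internalE c0_src G1_pop G2_pop).
exact: (precomp_cancel H_pop internalE a0_tgt G1_pop G2_pop).
Qed.
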